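(* Let $G$ be a finite graph with vertices $v_1,\ldots,v_n$, and let $H$ be obtained from $G$ by substituting complete graphs for the vertices of $G$; that is, $V(H)=C_1\cup\cdots\cup C_n$ is a partition into non-empty sets, each $C_i$ induces a complete graph in $H$, and for distinct $i,j$ and $x\in C_i$, $y\in C_j$ we have $xy\in E(H)$ if and only if $v_iv_j\in E(G)$. Then there is a one-to-one correspondence between the minimal chordal completions of $G$ and the minimal chordal completions of $H$.
   Context: A graph is chordal if it has no induced cycle of length at least four. A chordal completion of a graph $G=(V,E)$ is a chordal graph $G'=(V,E')$ with $E\subseteq E'$; it is minimal if no proper subgraph of $G'$ (on vertex set $V$) is a chordal completion of $G$. *)

From mathcomp Require Import all_boot.
Set Implicit Arguments. Unset Strict Implicit. Unset Printing Implicit Defensive.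

Section Graphs.
Variable T : finType.

Definition simple_graph (e : rel T) : Prop := symmetric e /\ irreflexive e.

Definition induced_cycle (e : rel T) (k : nat) (c : 'I_k -> T) : Prop :=
  [/\ 4 <= k, injective c &
    forall i j : 'I_k,
      e (c i) (c j) = (val j == i.+1 %% k) || (val i == j.+1 %% k)].

Definition chordal (e : rel T) : Prop :=
  forall (k : nat) (c : 'I_k -> T), ~ induced_cycle e c.

Definition chordal_completion (e e' : rel T) : Prop :=
  simple_graph e' /\ subrel e e' /\ chordal e'.

Definition minimal_chordal_completion (e e' : rel T) : Prop :=
  chordal_completion e e' /\
  forall e'', chordal_completion e e'' -> subrel e'' e' -> subrel e' e''.

End Graphs.

(* H obtained from G by substituting complete graphs for the vertices:
   p x = i means x \in C_i. *)
Definition substitute_cliques (V W : finType) (eG : rel V) (p : W -> V) : rel W :=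
  fun x y => (x != y) && ((p x == p y) || eG (p x) (p y)).

From mathcomp Require Import all_boot zify.
From Stdlib Require Import Classical.
Set Implicit Arguments. Unset Strict Implicit. Unset Printing Implicit Defensive.

(* Blowing a graph F on V up along p (F |-> substitute_cliques F p) and
   contracting a graph on W along p are mutually inverse on the graphs that
   matter.  Two adjacent vertices with the same neighbourhood never both lie on
   a chordless cycle of length >= 4, so such a cycle meets each class C_i at
   most once and projects to a chordless cycle; hence the blow-up of F is
   chordal iff F is.  Conversely, in a minimal chordal completion F of H two
   vertices x, x' of one class keep equal neighbourhoods: cutting both
   neighbourhoods down to the common one keeps the graph chordal, so by
   minimality nothing was cut.  Indeed, a chordless cycle through x but not x'
   leaves a chordless path whose two ends are adjacent to both x and x'; in the
   chordal graph F some inner vertex of that path is then adjacent to both, and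
   it is a chord.  Thus every minimal chordal completion of H is the blow-up of
   one of G, and blow-up and contraction are monotone. *)

Definition cycle_adj (k i j : nat) : bool :=
  [|| j == i.+1, i == j.+1, (i == 0) && (j == k.-1) | (j == 0) && (i == k.-1)].

Lemma cycle_adjE k i j : i < k -> j < k ->
  (j == i.+1 %% k) || (i == j.+1 %% k) = cycle_adj k i j.
Proof.
have modS l : l < k -> l.+1 %% k = if l.+1 < k then l.+1 else 0.
  move=> lk; case: ltnP => h; first by rewrite modn_small.
  have -> : l.+1 = k by lia.
  by rewrite modnn.
by move=> ik jk; rewrite !modS // /cycle_adj; do 2 case: ifP; lia.
Qed.

Section ChordlessCycles.
Variable T : finType.

(* Cycles indexed by nat rather than 'I_k, which makes rotating and
   splitting them a matter of arithmetic. *)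
Definition chordless_cycle (e : rel T) (k : nat) (c : nat -> T) : Prop :=
  [/\ 4 <= k, (forall i j, i < k -> j < k -> c i = c j -> i = j) &
      forall i j, i < k -> j < k -> e (c i) (c j) = cycle_adj k i j].

Lemma chordless_cycle_not_chordal e k c : chordless_cycle e k c -> ~ chordal e.
Proof.
case=> k4 c_inj c_adj e_ch; apply: (e_ch k (fun i : 'I_k => c i)); split=> //.
  by move=> i j /(c_inj _ _ (ltn_ord i) (ltn_ord j)) /val_inj.
by move=> i j /=; rewrite c_adj // cycle_adjE.
Qed.

Lemma induced_cycle_chordless e k (c : 'I_k -> T) :
  induced_cycle e c -> exists c', chordless_cycle e k c'.
Proof.
case=> k4 c_inj c_adj; have i0 : 'I_k by exists 0; lia.
exists (fun n => c (insubd i0 n)); split=> //.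
  by move=> i j ik jk /c_inj /(congr1 val); rewrite !val_insubd ik jk.
by move=> i j ik jk; rewrite c_adj !val_insubd ik jk cycle_adjE.
Qed.

Lemma chordless_cycle_rot e k c r : r <= k -> chordless_cycle e k c ->
  chordless_cycle e k (fun n => if n + r < k then c (n + r) else c (n + r - k)).
Proof.
move=> rk [k4 c_inj c_adj]; split=> //.
  by move=> i j ik jk; do 2 case: ifP => ?; move/c_inj; lia.
by move=> i j ik jk; do 2 case: ifP => ?; rewrite c_adj /cycle_adj; lia.
Qed.

Lemma chordless_cycle_twin_edge e k c i j : symmetric e -> chordless_cycle e k c ->
  i < k -> j < k -> i != j -> e (c i) (c j) ->
  ~ (forall z, z != c i -> z != c j -> e (c i) z = e (c j) z).
Proof.
move=> e_sym [k4 c_inj c_adj] ik jk ij eij twin.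
have [l [lk li lj adj_l]] : exists l,
    [/\ l < k, l != i, l != j & cycle_adj k i l != cycle_adj k j l].
  move: eij; rewrite c_adj // /cycle_adj.
  case/or4P=> [/eqP ji|/eqP ij'|/andP[/eqP i0 /eqP jk']|/andP[/eqP j0 /eqP ik']].
  - by exists (if i == 0 then k.-1 else i.-1); case: eqP; split; lia.
  - by exists (if j == 0 then k.-1 else j.-1); case: eqP; split; lia.
  - by exists 1; split; lia.
  - by exists 1; split; lia.
have c_neq m : m < k -> m != l -> c l != c m.
  by move=> mk; apply: contra_neq => /c_inj ->.
by move: adj_l; rewrite -!c_adj // twin ?eqxx // c_neq // eq_sym.
Qed.

End ChordlessCycles.

Section ChordalPaths.
Variables (T : finType) (K : rel T).
Hypotheses (K_chordal : chordal K) (K_sym : symmetric K) (K_irr : irreflexive K).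

Definition chordless_path (m : nat) (q : nat -> T) : Prop :=
  (forall s t, s <= m -> t <= m -> q s = q t -> s = t) /\
  (forall s t, s <= m -> t <= m -> K (q s) (q t) = (t == s.+1) || (s == t.+1)).

Lemma chordal_path_inner_neighbor m q w : chordless_path m q -> 2 <= m ->
    (forall t, t <= m -> q t != w) -> K w (q 0) -> K w (q m) ->
  exists2 t, 0 < t < m & K w (q t).
Proof.
move=> [q_inj q_adj] m2 q_w Kw0 Kwm.
case: (boolP [exists t : 'I_m, (0 < t) && K w (q t)]).
  by case/existsP=> t /andP[t0 Kwt]; exists t; rewrite ?t0 ?ltn_ord.
move=> no_inner; exfalso.
have Kw t : t <= m -> K w (q t) = (t == 0) || (t == m).
  case: t => [|t] tm; first by rewrite Kw0.
  case: (ltnP t.+1 m) => tm'; last first.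
    have -> : t.+1 = m by lia.
    by rewrite Kwm eqxx orbT.
  have -> : (t.+1 == m) = false by lia.
  apply/negbTE/negP => Kwt; case/negP: no_inner; apply/existsP.
  by exists (Ordinal tm'); rewrite Kwt.
apply: (@chordless_cycle_not_chordal _ K m.+2 (fun n => if n <= m then q n else w)) => //.
split; first lia.
  move=> i j im jm; case: ifP => hi; case: ifP => hj.
  - exact: q_inj.
  - by move=> E; move: (q_w i); rewrite E eqxx => /(_ (idP hi)).
  - by move=> E; move: (q_w j); rewrite E eqxx => /(_ (idP hj)).
  - lia.
move=> i j im jm; case: ifP => hi; case: ifP => hj.
- by rewrite q_adj // /cycle_adj; lia.
- by rewrite K_sym Kw // /cycle_adj; lia.
- by rewrite Kw // /cycle_adj; lia.
- by rewrite K_irr /cycle_adj; lia.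
Qed.

Lemma chordal_no_path_cycle n q b b' : chordless_path n q -> 1 <= n ->
    b != b' -> K b b' -> (forall t, t <= n -> (q t != b) && (q t != b')) ->
    (forall t, t <= n -> K b' (q t) = (t == 0)) ->
    (forall t, t <= n -> K b (q t) = (t == n)) ->
  False.
Proof.
move=> [q_inj q_adj] n1 bb' Kbb' q_b Kb' Kb.
apply: (@chordless_cycle_not_chordal _ K n.+3
  (fun u => if u <= n then q u else if u == n.+1 then b else b')) => //.
split; first lia.
  move=> i j ik jk.
  case: (boolP (i <= n)) => h1; case: (boolP (j <= n)) => h2;
  case: (boolP (i == n.+1)) => h3; case: (boolP (j == n.+1)) => h4;
  rewrite ?h1 ?h2 ?h3 ?h4 /=; try (exact: q_inj); try lia;
  try (by move=> E; move: (q_b i h1); rewrite E eqxx ?andbF);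
  try (by move=> E; move: (q_b j h2); rewrite E eqxx ?andbF);
  by move=> E; move: bb'; rewrite E eqxx.
move=> i j ik jk.
case: (boolP (i <= n)) => h1; case: (boolP (j <= n)) => h2;
case: (boolP (i == n.+1)) => h3; case: (boolP (j == n.+1)) => h4;
rewrite ?h1 ?h2 ?h3 ?h4 /=; try (rewrite q_adj // /cycle_adj; lia);
try (rewrite K_sym Kb // /cycle_adj; lia); try (rewrite K_sym Kb' // /cycle_adj; lia);
try (rewrite Kb // /cycle_adj; lia); try (rewrite Kb' // /cycle_adj; lia);
try (rewrite K_irr /cycle_adj; lia); try (rewrite Kbb' /cycle_adj; lia);
rewrite K_sym Kbb' /cycle_adj; lia.
Qed.

(* Take the last b'-neighbour q_s before q_j and the first b-neighbour q_t
   after q_s: then b' q_s ... q_t b is a chordless cycle. *)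
Lemma chordal_no_separate_neighbors m q b b' i j : chordless_path m q ->
    b != b' -> K b b' -> (forall t, t <= m -> (q t != b) && (q t != b')) ->
    (forall t, 0 < t < m -> ~~ (K b (q t) && K b' (q t))) ->
    0 < i -> i < j -> j < m -> K b' (q i) -> K b (q j) ->
  False.
Proof.
move=> [q_inj q_adj] bb' Kbb' q_b inner i0 ij jm Kb'i Kbj.
pose P s := (i <= s < j) && K b' (q s).
have P_i : exists s, P s by exists i; rewrite /P Kb'i leqnn ij.
have P_ub s : P s -> s <= j by case/andP=> /andP[_ h] _; lia.
have [s /andP[/andP[i_s sj] Kb's] s_max] := ex_maxnP P_i P_ub.
pose Q t := (s < t <= j) && K b (q t).
have Q_j : exists t, Q t by exists j; rewrite /Q Kbj sj leqnn.
have [t /andP[/andP[st tj] Kbt] t_min] := ex_minnP Q_j.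
apply: (@chordal_no_path_cycle (t - s) (fun u => q (s + u)) b b') => //.
- split; last by move=> u v uts vts; rewrite q_adj; lia.
  by move=> u v uts vts /q_inj; lia.
- lia.
- by move=> u uts; apply: q_b; lia.
- case=> [|u] uts; first by rewrite addn0 Kb's.
  apply/negbTE/negP => Kb'u.
  case: (ltnP (s + u.+1) j) => h.
    by have := s_max (s + u.+1); rewrite /P Kb'u h andbT => /(_ ltac:(lia)); lia.
  have E : s + u.+1 = j by lia.
  by have := inner j; rewrite Kbj -E Kb'u /= => /(_ ltac:(lia)).
- move=> u uts; case: (ltnP u (t - s)) => h; last first.
    have -> : s + u = t by lia.
    by rewrite Kbt; apply/esym/eqP; lia.
  have -> : (u == t - s) = false by lia.
  apply/negbTE/negP => Kbu.
  case: u uts h Kbu => [|u] uts h Kbu.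
    by have := inner s; rewrite addn0 in Kbu; rewrite Kbu Kb's /= => /(_ ltac:(lia)).
  by have := t_min (s + u.+1); rewrite /Q Kbu andbT => /(_ ltac:(lia)); lia.
Qed.

Lemma chordal_path_common_neighbor m q b b' : chordless_path m q -> 2 <= m ->
    b != b' -> K b b' -> (forall t, t <= m -> (q t != b) && (q t != b')) ->
    K b (q 0) -> K b (q m) -> K b' (q 0) -> K b' (q m) ->
  exists2 t, 0 < t < m & K b (q t) && K b' (q t).
Proof.
move=> q_path m2 bb' Kbb' q_b Kb0 Kbm Kb'0 Kb'm.
case: (boolP [exists t : 'I_m, (0 < t) && (K b (q t) && K b' (q t))]).
  by case/existsP=> t /andP[t0 Kt]; exists t; rewrite ?t0 ?ltn_ord.
move=> no_common; exfalso.
have inner t : 0 < t < m -> ~~ (K b (q t) && K b' (q t)).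
  case/andP=> t0 tm; apply/negP => Kt; case/negP: no_common; apply/existsP.
  by exists (Ordinal tm); rewrite t0.
have [i /andP[i0 im] Kb'i] : exists2 t, 0 < t < m & K b' (q t).
  by apply: chordal_path_inner_neighbor => // t tm; case/andP: (q_b t tm).
have [j /andP[j0 jm] Kbj] : exists2 t, 0 < t < m & K b (q t).
  by apply: chordal_path_inner_neighbor => // t tm; case/andP: (q_b t tm).
case: (ltngtP i j) => [ij|ji|ij].
- exact: (chordal_no_separate_neighbors q_path bb' Kbb' q_b inner i0 ij jm Kb'i Kbj).
- apply: (@chordal_no_separate_neighbors m q b' b j i q_path _ _ _ _ j0 ji im Kbj Kb'i).
  + by rewrite eq_sym.
  + by rewrite K_sym.
  + by move=> t tm; rewrite andbC; apply: q_b.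
  + by move=> t tm; rewrite andbC; apply: inner.
- by move: (inner i); rewrite i0 im Kb'i ij Kbj => /(_ isT).
Qed.

End ChordalPaths.

Section TwinRestriction.
Variables (T : finType) (K : rel T).
Hypotheses (K_chordal : chordal K) (K_sym : symmetric K) (K_irr : irreflexive K).

Lemma no_chordless_cycle_through_common_nbhd (e : rel T) k c b b' ib :
    b != b' -> K b b' ->
    (forall z w, z != b -> z != b' -> w != b -> w != b' -> e z w = K z w) ->
    (forall z, z != b -> z != b' -> e b z = K b z && K b' z) ->
    chordless_cycle e k c -> ib < k -> c ib = b -> (forall i, i < k -> c i != b') ->
  False.
Proof.
move=> bb' Kbb' e_out e_b c_cyc ibk cb c_b'.
have := chordless_cycle_rot ibk c_cyc; set c' := (fun n => _) => -[k4 c'_inj c'_adj].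
(* after rotation b sits at position k.-1, so c'_0 ... c'_(k-2) is a path of K *)
have c'b : c' k.-1 = b.
  rewrite /c'; have -> : (k.-1 + ib.+1 < k) = false by lia.
  by have -> : k.-1 + ib.+1 - k = ib by lia.
have c'_b t : t <= k.-2 -> (c' t != b) && (c' t != b').
  move=> tk; apply/andP; split.
    apply/eqP => E; have := c'_inj t k.-1 ltac:(lia) ltac:(lia).
    by rewrite E c'b => /(_ erefl); lia.
  by rewrite /c'; case: ifP => h; apply: c_b'; lia.
have c'_path : chordless_path K k.-2 c'.
  split=> [s t sk tk|s t sk tk]; first by apply: c'_inj; lia.
  case/andP: (c'_b s sk) => ? ?; case/andP: (c'_b t tk) => ? ?.
  by rewrite -e_out // c'_adj /cycle_adj; lia.
have Kbb'_c' t : t <= k.-2 -> K b (c' t) && K b' (c' t) = cycle_adj k k.-1 t.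
  by move=> tk; case/andP: (c'_b t tk) => ? ?; rewrite -e_b // -c'b c'_adj //; lia.
have /andP[Kb0 Kb'0] : K b (c' 0) && K b' (c' 0) by rewrite Kbb'_c' /cycle_adj; lia.
have /andP[Kbm Kb'm] : K b (c' k.-2) && K b' (c' k.-2) by rewrite Kbb'_c' /cycle_adj; lia.
have [t /andP[t0 tk]] := chordal_path_common_neighbor K_chordal K_sym K_irr c'_path
  ltac:(lia) bb' Kbb' c'_b Kb0 Kbm Kb'0 Kb'm.
by rewrite Kbb'_c' /cycle_adj; lia.
Qed.

Definition twin_restrict (a a' : T) : rel T := fun x y =>
  K x y && ((x \in [:: a; a']) ==> (y \in [:: a; a']) || K a y && K a' y)
        && ((y \in [:: a; a']) ==> (x \in [:: a; a']) || K a x && K a' x).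

Lemma twin_restrict_out a a' z w : z != a -> z != a' -> w != a -> w != a' ->
  twin_restrict a a' z w = K z w.
Proof.
move=> za za' wa wa'.
by rewrite /twin_restrict !inE (negbTE za) (negbTE za') (negbTE wa) (negbTE wa') !andbT.
Qed.

Lemma twin_restrictl a a' z : z != a -> z != a' ->
  twin_restrict a a' a z = K a z && K a' z.
Proof.
move=> za za'; rewrite /twin_restrict !inE (negbTE za) (negbTE za') eqxx /=.
by case: (K a z); case: (K a' z).
Qed.

Lemma twin_restrictr a a' z : z != a -> z != a' ->
  twin_restrict a a' a' z = K a' z && K a z.
Proof.
move=> za za'; rewrite /twin_restrict !inE (negbTE za) (negbTE za') eqxx orbT /=.
by case: (K a z); case: (K a' z).
Qed.

Lemma twin_restrict_sym a a' : symmetric (twin_restrict a a').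
Proof. by move=> x y; rewrite /twin_restrict K_sym andbAC. Qed.

Lemma twin_restrict_sub a a' : subrel (twin_restrict a a') K.
Proof. by move=> x y /andP[/andP[]]. Qed.

Lemma twin_restrict_chordal a a' : a != a' -> K a a' -> chordal (twin_restrict a a').
Proof.
move=> aa' Kaa' k c0 /induced_cycle_chordless [c c_cyc].
have [k4 c_inj c_adj] := c_cyc.
have c_avoid x : ~~ [exists i : 'I_k, c i == x] -> forall i, i < k -> c i != x.
  move=> no_x i ik; apply: contraNneq no_x => cx.
  by apply/existsP; exists (Ordinal ik); rewrite cx.
case: (boolP [exists i : 'I_k, c i == a]) => [/existsP[ia /eqP ca]|no_a];
case: (boolP [exists i : 'I_k, c i == a']) => [/existsP[ia' /eqP ca']|no_a'].
- apply: (chordless_cycle_twin_edge (@twin_restrict_sym a a') c_cyc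
    (ltn_ord ia) (ltn_ord ia')).
  + by apply: contra_neq aa' => /val_inj iaa'; rewrite -ca -ca' iaa'.
  + by rewrite ca ca' /twin_restrict !inE Kaa' !eqxx ?orbT.
  + move=> z; rewrite ca ca' => za za'.
    by rewrite twin_restrictl ?twin_restrictr 1?andbC.
- apply: (@no_chordless_cycle_through_common_nbhd (twin_restrict a a') k c a a' ia) => //.
  + exact: twin_restrict_out.
  + exact: twin_restrictl.
  + exact: c_avoid.
- apply: (@no_chordless_cycle_through_common_nbhd (twin_restrict a a') k c a' a ia') => //.
  + by rewrite eq_sym.
  + by rewrite K_sym.
  + by move=> z w *; apply: twin_restrict_out.
  + by move=> z *; rewrite twin_restrictr.
  + exact: c_avoid.
- apply: (@chordless_cycle_not_chordal _ K k c) => //; split=> // i j ik jk.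
  by rewrite -(@twin_restrict_out a a') ?c_adj //; apply: c_avoid.
Qed.

End TwinRestriction.

Lemma eq_chordal (T : finType) (e1 e2 : rel T) : e1 =2 e2 -> chordal e1 -> chordal e2.
Proof.
move=> e12 e1_ch k c [k4 c_inj c_adj].
by apply: (e1_ch k c); split=> // i j; rewrite e12.
Qed.

Lemma chordal_completion_minimal_sub (T : finType) (e e1 : rel T) :
  chordal_completion e e1 -> exists2 e0, minimal_chordal_completion e e0 & subrel e0 e1.
Proof.
pose edges (r : rel T) := [set xy : T * T | r xy.1 xy.2].
have [n] := ubnP #|edges e1|; elim: n e1 => // n IH e1 e1n e1_cc.
case: (classic (forall e2, chordal_completion e e2 -> subrel e2 e1 -> subrel e1 e2)).
  by exists e1.
move=> /not_all_ex_not[e2 not_min].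
have [e2_cc not_min'] := imply_to_and _ _ not_min.
have [e21 not_sub] := imply_to_and _ _ not_min'.
have [x not_x] := not_all_ex_not _ _ not_sub.
have [y not_xy] := not_all_ex_not _ _ not_x.
have [e1xy e2xy] := imply_to_and _ _ not_xy.
have e21_card : #|edges e2| < #|edges e1|.
  apply/proper_card/properP; split; first by apply/subsetP=> z; rewrite !inE; apply: e21.
  by exists (x, y); rewrite !inE //=; apply/negP.
have [|e0 e0_min e02] := IH e2 _ e2_cc; first by lia.
by exists e0 => // u v /e02 /e21.
Qed.

Section BlowUp.
Variables (V W : finType) (p : W -> V).

Definition contract (F : rel W) : rel V := fun u v =>
  (u != v) && [exists x, exists y, (p x == u) && (p y == v) && F x y].

Lemma substitute_cliques_sym F : symmetric F -> symmetric (substitute_cliques F p).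
Proof. by move=> F_sym x y; rewrite /substitute_cliques eq_sym F_sym [p y == _]eq_sym. Qed.

Lemma substitute_cliques_irr F : irreflexive (substitute_cliques F p).
Proof. by move=> x; rewrite /substitute_cliques eqxx. Qed.

Lemma substitute_cliques_mono F1 F2 :
  subrel F1 F2 -> subrel (substitute_cliques F1 p) (substitute_cliques F2 p).
Proof.
move=> F12 x y; rewrite /substitute_cliques.
by case/andP=> -> /orP[->//|/F12 ->]; rewrite orbT.
Qed.

Lemma contract_mono F1 F2 : subrel F1 F2 -> subrel (contract F1) (contract F2).
Proof.
move=> F12 u v; rewrite /contract.
case/andP=> -> /existsP[x /existsP[y /andP[/andP[xu yv] /F12 Fxy]]].
by apply/existsP; exists x; apply/existsP; exists y; rewrite xu yv Fxy.
Qed.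

Lemma substitute_cliques_twin F u v w : p u = p v -> w != u -> w != v ->
  substitute_cliques F p u w = substitute_cliques F p v w.
Proof. by move=> puv wu wv; rewrite /substitute_cliques puv !(eq_sym _ w) wu wv. Qed.

Lemma substitute_cliques_chordal F :
  simple_graph F -> chordal F -> chordal (substitute_cliques F p).
Proof.
move=> [F_sym F_irr] F_ch k c0 /induced_cycle_chordless [c c_cyc].
have [k4 c_inj c_adj] := c_cyc.
have pc_inj i j : i < k -> j < k -> p (c i) = p (c j) -> i = j.
  move=> ik jk pij; case: (eqVneq i j) => // ij; exfalso.
  have cij : c i != c j by apply: contra_neq ij => /c_inj; apply.
  apply: (chordless_cycle_twin_edge (substitute_cliques_sym F_sym) c_cyc ik jk ij).
    by rewrite /substitute_cliques cij pij eqxx.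
  by move=> z zi zj; apply: substitute_cliques_twin.
apply: (@chordless_cycle_not_chordal _ F k (fun n => p (c n))) => //; split=> //.
move=> i j ik jk; rewrite -c_adj //.
case: (eqVneq i j) => [->|ij]; first by rewrite F_irr substitute_cliques_irr.
have pij : p (c i) != p (c j) by apply: contra_neq ij => /pc_inj; apply.
have cij : c i != c j by apply: contraNneq pij => ->.
by rewrite /substitute_cliques cij (negbTE pij).
Qed.

Variables (eG : rel V) (s : V -> W).
Hypotheses (eG_simple : simple_graph eG) (p_s : cancel s p).
Notation H := (substitute_cliques eG p).

Lemma chordal_of_substitute_cliques F : chordal (substitute_cliques F p) -> chordal F.
Proof.
move=> FH_ch k c0 /induced_cycle_chordless [c [k4 c_inj c_adj]].
apply: (@chordless_cycle_not_chordal _ _ k (s \o c) _ FH_ch); split=> //.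
  by move=> i j ik jk /(congr1 p); rewrite /= !p_s; apply: c_inj.
move=> i j ik jk; case: (eqVneq i j) => [->|ij].
  by rewrite substitute_cliques_irr /cycle_adj; lia.
have cij : c i != c j by apply: contra_neq ij => /c_inj; apply.
have scij : s (c i) != s (c j) by apply: contra_neq cij => /(can_inj p_s).
by rewrite /substitute_cliques /= scij !p_s (negbTE cij) c_adj.
Qed.

Lemma substitute_cliquesK F : irreflexive F -> contract (substitute_cliques F p) =2 F.
Proof.
move=> F_irr u v; rewrite /contract.
case: (eqVneq u v) => [->|uv] /=; first by rewrite F_irr.
apply/existsP/idP.
  case=> x /existsP[y /andP[/andP[/eqP xu /eqP yv]]].
  by rewrite /substitute_cliques xu yv (negbTE uv) => /andP[].
move=> Fuv; exists (s u); apply/existsP; exists (s v).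
rewrite !p_s !eqxx /substitute_cliques !p_s (negbTE uv) Fuv !andbT /=.
by apply: contra_neq uv => /(can_inj p_s).
Qed.

Lemma substitute_cliques_completion F :
  chordal_completion eG F -> chordal_completion H (substitute_cliques F p).
Proof.
move=> [F_simple [GF F_ch]]; split; [split|split].
- by apply: substitute_cliques_sym; case: F_simple.
- exact: substitute_cliques_irr.
- exact: substitute_cliques_mono.
- exact: substitute_cliques_chordal.
Qed.

Lemma minimal_completion_class_twins F : minimal_chordal_completion H F ->
  forall x x' z, p x = p x' -> x != x' -> z != x -> z != x' -> F x z = F x' z.
Proof.
move=> [[[F_sym F_irr] [HF F_ch]] F_min] x x' z pxx' xx' zx zx'.
have Fxx' : F x x' by apply: HF; rewrite /substitute_cliques xx' pxx' eqxx.
have H_sym : symmetric H by apply: substitute_cliques_sym; case: eG_simple.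
have H_leave u v : u \in [:: x; x'] -> v \notin [:: x; x'] -> H u v -> F x v && F x' v.
  rewrite !inE negb_or => u_xx' /andP[vx vx'] Huv.
  have Hxv : H x v.
    case/orP: u_xx' => /eqP u_eq; first by rewrite -u_eq.
    by rewrite (substitute_cliques_twin _ pxx') // -u_eq.
  by rewrite !HF // -(substitute_cliques_twin _ pxx').
have restr_cc : chordal_completion H (twin_restrict F x x').
  split; [split|split].
  - exact: twin_restrict_sym.
  - by move=> u; apply/negP => /twin_restrict_sub; rewrite F_irr.
  - move=> u v Huv; rewrite /twin_restrict (HF _ _ Huv) /=.
    apply/andP; split; apply/implyP => w_in.
      case: (boolP (v \in [:: x; x'])) => [//|v_out].
      by rewrite (H_leave u v).
    case: (boolP (u \in [:: x; x'])) => [//|u_out].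
    by rewrite (H_leave v u) // H_sym.
  - exact: twin_restrict_chordal.
have F_restr := F_min _ restr_cc (@twin_restrict_sub _ F x x').
apply/idP/idP => Fz.
- by move: (F_restr _ _ Fz); rewrite (twin_restrictl _ zx zx') => /andP[].
- by move: (F_restr _ _ Fz); rewrite (twin_restrictr _ zx zx') => /andP[].
Qed.

Lemma minimal_completion_blowup F : minimal_chordal_completion H F ->
  F =2 substitute_cliques (contract F) p.
Proof.
move=> F_min; have [[[F_sym F_irr] [HF _]] _] := F_min.
have twins := minimal_completion_class_twins F_min.
move=> x y; rewrite /substitute_cliques /contract.
case: (eqVneq x y) => [->|xy] /=; first by rewrite F_irr.
case: (eqVneq (p x) (p y)) => [pxy|pxy] /=.
  by apply: HF; rewrite /substitute_cliques xy pxy eqxx.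
apply/idP/existsP => [Fxy|[x' /existsP[y' /andP[/andP[/eqP px' /eqP py'] Fx'y']]]].
  by exists x; apply/existsP; exists y; rewrite !eqxx.
have Fxy' : F x y'.
  case: (eqVneq x x') => [->//|xx'].
  rewrite (twins x x' y') //.
  - by apply: contraNneq pxy => <-; rewrite py'.
  - by apply: contraTneq Fx'y' => ->; rewrite F_irr.
have Fy'x : F y' x by rewrite F_sym.
case: (eqVneq y' y) => [<-//|y'y].
rewrite F_sym -(twins y' y x) //.
by apply: contraNneq pxy => ->; rewrite py'.
Qed.

Lemma contract_completion F :
  minimal_chordal_completion H F -> chordal_completion eG (contract F).
Proof.
move=> F_min; have [[[F_sym F_irr] [HF F_ch]] _] := F_min.
split; [split|split].
- move=> u v; rewrite /contract eq_sym; congr (_ && _).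
  apply/existsP/existsP => -[x /existsP[y /andP[/andP[xu yv] Fxy]]];
  by exists y; apply/existsP; exists x; rewrite xu yv F_sym Fxy.
- by move=> u; rewrite /contract eqxx.
- move=> u v Guv.
  have uv : u != v by apply: contraTneq Guv => ->; rewrite eG_simple.2.
  rewrite /contract uv; apply/existsP; exists (s u); apply/existsP; exists (s v).
  rewrite !p_s !eqxx /=; apply: HF; rewrite /substitute_cliques !p_s Guv orbT andbT.
  by apply: contra_neq uv => /(can_inj p_s).
- apply: chordal_of_substitute_cliques; apply: eq_chordal F_ch.
  exact: minimal_completion_blowup.
Qed.

Lemma substitute_cliques_minimal F : minimal_chordal_completion eG F ->
  minimal_chordal_completion H (substitute_cliques F p).
Proof.
move=> [F_cc F_min]; split; first exact: substitute_cliques_completion.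
move=> F' F'_cc F'_sub.
have [F0 F0_min F0_sub] := chordal_completion_minimal_sub F'_cc.
have F0_F : subrel (contract F0) F.
  move=> u v /(contract_mono F0_sub) /(contract_mono F'_sub).
  by rewrite (substitute_cliquesK F_cc.1.2).
have F_F0 := F_min _ (contract_completion F0_min) F0_F.
move=> x y /(substitute_cliques_mono F_F0).
by rewrite -minimal_completion_blowup //; apply: F0_sub.
Qed.

Lemma contract_minimal F : minimal_chordal_completion H F ->
  minimal_chordal_completion eG (contract F).
Proof.
move=> F_min; split; first exact: contract_completion.
move=> F' F'_cc F'_sub.
have F'_F : subrel (substitute_cliques F' p) F.
  by move=> x y /(substitute_cliques_mono F'_sub); rewrite -minimal_completion_blowup.
have F_F' := F_min.2 _ (substitute_cliques_completion F'_cc) F'_F.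
by move=> u v /(contract_mono F_F'); rewrite (substitute_cliquesK F'_cc.1.2).
Qed.

End BlowUp.

Unset Implicit Arguments.

Theorem lemma3 (V W : finType) (eG : rel V) (p : W -> V) :
  simple_graph eG ->
  (forall v : V, exists x : W, p x = v) ->
  exists (f : rel V -> rel W) (g : rel W -> rel V),
    (forall F, minimal_chordal_completion eG F ->
               minimal_chordal_completion (substitute_cliques eG p) (f F)) /\
    (forall F, minimal_chordal_completion (substitute_cliques eG p) F ->
               minimal_chordal_completion eG (g F)) /\
    (forall F, minimal_chordal_completion eG F -> g (f F) =2 F) /\
    (forall F, minimal_chordal_completion (substitute_cliques eG p) F ->
               f (g F) =2 F).
Proof.
move=> eG_simple p_surj.
have p_surj' v : exists x, p x == v by have [x <-] := p_surj v; exists x.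
pose s v := xchoose (p_surj' v).
have p_s : cancel s p by move=> v; apply/eqP/(xchooseP (p_surj' v)).
exists (fun F => substitute_cliques F p), (contract p).
split; [|split; [|split]] => F F_min.
- exact: substitute_cliques_minimal eG_simple p_s F F_min.
- exact: contract_minimal eG_simple p_s F F_min.
- exact: substitute_cliquesK p_s F F_min.1.1.2.
- by move=> x y; rewrite -(minimal_completion_blowup eG_simple F_min).
Qed.
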